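(* Let $(X,\Sigma)$ be a measurable space, $p$ a transition function on it with associated operator $A$ on $ba(X,\Sigma)$, and let $K=\{\mu_1,\dots,\mu_m\}$ be a finitely additive cycle of measures of $A$. Then $K$ is countably additive (i.e. all $\mu_i$ are countably additive) if and only if its mean measure $\frac1m\sum_{k=1}^m\mu_k$ is countably additive.
   Context: $X$ is an arbitrary infinite set and $\Sigma$ a $\sigma$-algebra of subsets of $X$ containing all one-point sets. $ba(X,\Sigma)$ denotes the space of bounded finitely additive real-valued measures on $\Sigma$. A transition function is a map $p(x,E)$ with $0\le p(x,E)\le1$, $p(x,X)=1$, $p(\cdot,E)$ bounded $\Sigma$-measurable for every $E\in\Sigma$, and $p(x,\cdot)$ countably additive for every $x\in X$. The Markov operator is $A\mu(E)=\int_X p(x,E)\,\mu(dx)$. A cycle of measures of $A$ is a finite numbered set $\{\mu_1,\dots,\mu_m\}$ of pairwise different positive finitely additive measures with $A\mu_i=\mu_{i+1}$ ($1\le i\le m-1$), $A\mu_m=\mu_1$; its mean measure is $\frac1m\sum_k\mu_k$. *)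

From HB Require Import structures.
From mathcomp Require Import all_boot all_order all_algebra.
From mathcomp Require Import all_classical all_reals all_analysis.
Set Implicit Arguments. Unset Strict Implicit. Unset Printing Implicit Defensive.
Import Order.TTheory GRing.Theory Num.Theory.
Import numFieldNormedType.Exports.
Local Open Scope classical_set_scope.
Local Open Scope ring_scope.

Section Defs.
Context {d : measure_display} {X : measurableType d} {R : realType}.

(* finitely additive (real-valued, hence bounded when positive) measure on Sigma *)
Definition fin_additive (mu : set X -> R) : Prop :=
  mu set0 = 0 /\
  forall A B, measurable A -> measurable B -> A `&` B = set0 ->
    mu (A `|` B) = mu A + mu B.

Definition positive_measure (mu : set X -> R) : Prop :=
  forall A, measurable A -> 0 <= mu A.

Definition count_additive (mu : set X -> R) : Prop :=
  forall F : nat -> set X, (forall n, measurable (F n)) -> trivIset setT F ->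
    (fun n => \sum_(k < n) mu (F k)) @ \oo --> mu (\bigcup_k F k).

Definition transition_function (p : X -> set X -> R) : Prop :=
  (forall x E, measurable E -> 0 <= p x E <= 1) /\
  (forall x, p x setT = 1) /\
  (forall E, measurable E -> measurable_fun setT (fun x => p x E)) /\
  (forall x, count_additive (p x)).

(* [fa_integral_is mu f I]: I is the integral of the bounded measurable
   function f against the bounded finitely additive measure mu, defined as
   the limit of Riemann-Stieltjes sums over finite measurable partitions of X
   on whose cells f oscillates less than delta, as delta -> 0. *)
Definition fa_integral_is (mu : set X -> R) (f : X -> R) (I : R) : Prop :=
  forall eps : R, 0 < eps -> exists2 delta : R, 0 < delta &
    forall (n : nat) (E : 'I_n -> set X) (x : 'I_n -> X),
      (forall j, measurable (E j)) ->
      (forall j k, j != k -> E j `&` E k = set0) ->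
      (forall y, exists j, E j y) ->
      (forall j, E j (x j)) ->
      (forall j y z, E j y -> E j z -> `|f y - f z| < delta) ->
      `| \sum_(j < n) f (x j) * mu (E j) - I | < eps.

(* [markov_image p mu nu] : nu = A mu, i.e. nu E = \int p(x,E) mu(dx) for all E in Sigma *)
Definition markov_image (p : X -> set X -> R) (mu nu : set X -> R) : Prop :=
  forall E, measurable E -> fa_integral_is mu (fun x => p x E) (nu E).

Definition measure_cycle (p : X -> set X -> R) (m : nat) (mu : 'I_m -> set X -> R) : Prop :=
  (0 < m)%N /\
  (forall i, fin_additive (mu i) /\ positive_measure (mu i)) /\
  (forall i j, i != j -> exists2 E, measurable E & mu i E <> mu j E) /\
  (forall i j : 'I_m, val j = ((val i).+1 %% m)%N -> markov_image p (mu i) (mu j)).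

Definition mean_measure (m : nat) (mu : 'I_m -> set X -> R) : set X -> R :=
  fun E => (m%:R)^-1 * \sum_(k < m) mu k E.

End Defs.

From HB Require Import structures.
From mathcomp Require Import all_boot all_order all_algebra.
From mathcomp Require Import all_classical all_reals all_analysis.
Import Order.TTheory GRing.Theory Num.Theory.
Import numFieldNormedType.Exports.
Local Open Scope classical_set_scope.
Local Open Scope ring_scope.

(* Countable additivity is preserved by
   finite sums and scalar multiples, which gives one direction.  Conversely
   [mu_i <= m * mean], and a positive finitely additive measure dominated by
   a multiple of a countably additive one is countably additive, since its
   tails [mu (\bigcup_k F k \ (F_0 u ... u F_(n-1)))] are squeezed to [0]. *)

Section CountAdditive.
Context {d : measure_display} {X : measurableType d} {R : realType}.
Implicit Types (mu nu : set X -> R) (F : nat -> set X).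

Lemma fin_additive_bigsetU {mu F} :
  fin_additive mu -> (forall n, measurable (F n)) -> trivIset setT F ->
  forall n, mu (\big[setU/set0]_(k < n) F k) = \sum_(k < n) mu (F k).
Proof.
move=> [mu0 muU] mF tF; elim=> [|n IH]; first by rewrite !big_ord0.
rewrite !big_ord_recr /= muU ?IH //; first exact: bigsetU_measurable.
rewrite -bigcup_mkord; apply/seteqP; split => x //= [[k /= kn Fk] Fn].
by move: kn; rewrite (tF k n I I (ex_intro _ x (conj Fk Fn))) ltnn.
Qed.

Definition bigcup_tail F n := \bigcup_k F k `\` \big[setU/set0]_(k < n) F k.

Lemma measurable_bigcup_tail F n :
  (forall k, measurable (F k)) -> measurable (bigcup_tail F n).
Proof.
move=> mF; apply: measurableD; first exact: bigcupT_measurable.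
exact: bigsetU_measurable.
Qed.

Lemma fin_additive_partial_sum {mu F} :
  fin_additive mu -> (forall n, measurable (F n)) -> trivIset setT F ->
  forall n, \sum_(k < n) mu (F k) = mu (\bigcup_k F k) - mu (bigcup_tail F n).
Proof.
move=> fa mF tF n.
have GU : \big[setU/set0]_(k < n) F k `<=` \bigcup_k F k.
  by rewrite -bigcup_mkord => x [k _ Fk]; exists k.
rewrite -{1}(setDUK GU) fa.2; first by rewrite fin_additive_bigsetU // addrK.
- exact: bigsetU_measurable.
- exact: measurable_bigcup_tail.
- by apply/seteqP; split => x //= [Gx [_ nGx]].
Qed.

Lemma count_additive_tail {mu} : fin_additive mu ->
  count_additive mu <->
  forall F, (forall n, measurable (F n)) -> trivIset setT F ->
    (fun n => mu (bigcup_tail F n)) @ \oo --> 0.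
Proof.
move=> fa; split => ca F mF tF.
- have : (fun n => mu (\bigcup_k F k) - \sum_(k < n) mu (F k)) @ \oo -->
      mu (\bigcup_k F k) - mu (\bigcup_k F k).
    exact: cvgB (cvg_cst _) (ca F mF tF).
  rewrite subrr; under eq_fun do rewrite (fin_additive_partial_sum fa mF tF).
  by under eq_fun do rewrite subKr.
- have : (fun n => mu (\bigcup_k F k) - mu (bigcup_tail F n)) @ \oo -->
      mu (\bigcup_k F k) - 0.
    exact: cvgB (cvg_cst _) (ca F mF tF).
  by rewrite subr0; under eq_fun do rewrite -(fin_additive_partial_sum fa mF tF).
Qed.

Lemma count_additive_dominated {mu nu} (C : R) :
  fin_additive mu -> positive_measure mu ->
  fin_additive nu -> count_additive nu ->
  (forall E, measurable E -> mu E <= C * nu E) -> count_additive mu.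
Proof.
move=> famu pmu fanu canu le_mu_nu; apply/(count_additive_tail famu) => F mF tF.
have nu_tail : (fun n => C * nu (bigcup_tail F n)) @ \oo --> 0.
  rewrite -(mulr0 C); apply: cvgMl_tmp.
  exact: (count_additive_tail fanu).1 canu F mF tF.
apply: (squeeze_cvgr _ _ nu_tail); last exact: cvg_cst.
apply: nearW => n /=; have mT := measurable_bigcup_tail F n mF.
by rewrite pmu ?le_mu_nu.
Qed.

Lemma fin_additive_scale (c : R) mu :
  fin_additive mu -> fin_additive (fun E => c * mu E).
Proof.
move=> [mu0 muU]; split => [|A B mA mB AB]; first by rewrite mu0 mulr0.
by rewrite muU // mulrDr.
Qed.

Lemma fin_additive_sum (I : Type) (s : seq I) (mu : I -> set X -> R) :
  (forall i, fin_additive (mu i)) -> fin_additive (fun E => \sum_(i <- s) mu i E).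
Proof.
move=> fa; split => [|A B mA mB AB].
  by rewrite big1 // => i _; rewrite (fa i).1.
by rewrite -big_split; apply: eq_bigr => i _; rewrite (fa i).2.
Qed.

Lemma count_additive_scale (c : R) mu :
  count_additive mu -> count_additive (fun E => c * mu E).
Proof.
move=> ca F mF tF; under eq_fun do rewrite -mulr_sumr.
exact: cvgMl_tmp (ca F mF tF).
Qed.

Lemma count_additive_sum (I : Type) (s : seq I) (mu : I -> set X -> R) :
  (forall i, count_additive (mu i)) ->
  count_additive (fun E => \sum_(i <- s) mu i E).
Proof.
move=> ca F mF tF.
have -> : (fun n => \sum_(k < n) \sum_(i <- s) mu i (F k)) =
          (fun n => \sum_(i <- s) \sum_(k < n) mu i (F k)).
  by apply/funext => n; exact: exchange_big.
by apply: (cvg_big add_continuous) => // i _; exact: ca.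
Qed.

Lemma le_mean_measure (m : nat) (mu : 'I_m -> set X -> R) (i : 'I_m) E :
  (forall k, positive_measure (mu k)) -> measurable E ->
  mu i E <= m%:R * mean_measure mu E.
Proof.
move=> pmu mE; have m_neq0 : (m%:R : R) != 0.
  by rewrite pnatr_eq0 -lt0n (leq_trans _ (ltn_ord i)).
rewrite /mean_measure mulrA mulfV // mul1r (bigD1 i) //= lerDl.
by apply: sumr_ge0 => k _; exact: pmu.
Qed.

End CountAdditive.

Theorem corollary4p1 (d : measure_display) (X : measurableType d) (R : realType)
  (hinf : infinite_set [set: X])
  (hsingle : forall x : X, measurable [set x])
  (p : X -> set X -> R) (hp : transition_function p)
  (m : nat) (mu : 'I_m -> set X -> R) (hK : measure_cycle p mu) :
  (forall i, count_additive (mu i)) <-> count_additive (mean_measure mu).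
Proof.
case: hK => _ [fa_pos _].
have famu i : fin_additive (mu i) by exact: (fa_pos i).1.
have pmu i : positive_measure (mu i) by exact: (fa_pos i).2.
split => [ca | ca_mean i].
- by apply: count_additive_scale; exact: count_additive_sum.
- have fa_mean : fin_additive (mean_measure mu).
    by apply: fin_additive_scale; exact: fin_additive_sum.
  apply: (count_additive_dominated m%:R (famu i) (pmu i) fa_mean ca_mean).
  by move=> E mE; exact: le_mean_measure.
Qed.
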